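(* Let $B\colon\mathbf{Set}\to\mathbf{Set}$ be a functor, $\Lambda$ a set, and $(\tau_\lambda\colon B[0,1]\to[0,1])_{\lambda\in\Lambda}$ arbitrary functions. For every coalgebra $\alpha\colon X\to BX$ and all $s,t\in X$, $d_\alpha(s,t)\ge d^L_\alpha(s,t)$.
   Context: Formulas: $\varphi::=\top\mid\neg\varphi\mid\min(\varphi_1,\varphi_2)\mid(\ominus q)\varphi\ (q\in\mathbb{Q}\cap[0,1])\mid\heartsuit_\lambda\varphi\ (\lambda\in\Lambda)$. Semantics $[\![\varphi]\!]_\alpha\colon X\to[0,1]$: $[\![\top]\!]=1$, $[\![\neg\varphi]\!]=1-[\![\varphi]\!]$, $[\![\min(\varphi_1,\varphi_2)]\!]=\min([\![\varphi_1]\!],[\![\varphi_2]\!])$, $[\![(\ominus q)\varphi]\!]=\max([\![\varphi]\!]-q,0)$ (pointwise), $[\![\heartsuit_\lambda\varphi]\!]=\tau_\lambda\circ B[\![\varphi]\!]\circ\alpha$. Logical distance: $d^L_\alpha(s,t)=\sup_\varphi|[\![\varphi]\!]_\alpha(s)-[\![\varphi]\!]_\alpha(t)|$. For a 1-bounded pseudometric $d$ on $X$, let $d_B$ on $BX$ be $d_B(t_1,t_2)=\sup_{\lambda\in\Lambda,h}|\tau_\lambda(Bh(t_1))-\tau_\lambda(Bh(t_2))|$, $h$ ranging over nonexpansive maps $(X,d)\to([0,1],d_e)$ with $d_e$ the Euclidean metric. The behavioral distance $d_\alpha$ is the pointwise least 1-bounded pseudometric $d$ on $X$ satisfying $d(s,t)=d_B(\alpha(s),\alpha(t))$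 for all $s,t$ (the greatest fixed point in the order $\sqsubseteq$ = pointwise $\ge$ on 1-bounded pseudometrics). *)

From Stdlib Require Import Reals Lra QArith.
Open Scope R_scope.

Definition I01 : Set := {x : R | 0 <= x <= 1}.
Definition val01 (x : I01) : R := proj1_sig x.

Lemma neg01_pf (x : I01) : 0 <= 1 - val01 x <= 1.
Proof. destruct x as [x Hx]; simpl; unfold val01; simpl; lra. Qed.
Definition neg01 (x : I01) : I01 := exist _ (1 - val01 x) (neg01_pf x).

Lemma min01_pf (x y : I01) : 0 <= Rmin (val01 x) (val01 y) <= 1.
Proof.
  destruct x as [x Hx], y as [y Hy]; unfold val01; simpl.
  unfold Rmin; destruct (Rle_dec x y); lra.
Qed.
Definition min01 (x y : I01) : I01 := exist _ (Rmin (val01 x) (val01 y)) (min01_pf x y).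

Lemma sub01_pf (q : R) (hq : 0 <= q <= 1) (x : I01) : 0 <= Rmax (val01 x - q) 0 <= 1.
Proof.
  destruct x as [x Hx]; unfold val01; simpl.
  unfold Rmax; destruct (Rle_dec (x - q) 0); lra.
Qed.

Inductive form (Lam : Type) : Type :=
| FTop : form Lam
| FNeg : form Lam -> form Lam
| FMin : form Lam -> form Lam -> form Lam
| FSub : forall q : Q, (0 <= Q2R q <= 1) -> form Lam -> form Lam
| FBox : Lam -> form Lam -> form Lam.
Arguments FTop {Lam}.
Arguments FNeg {Lam} _.
Arguments FMin {Lam} _ _.
Arguments FSub {Lam} _ _ _.
Arguments FBox {Lam} _ _.

Section Semantics.
Variable B : Type -> Type.
Variable Bmap : forall X Y : Type, (X -> Y) -> B X -> B Y.
Variable Lam : Type.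
Variable tau : Lam -> B I01 -> I01.
Variable X : Type.
Variable alpha : X -> B X.

Lemma one01_pf : 0 <= 1 <= 1. Proof. lra. Qed.

Fixpoint sem (phi : form Lam) : X -> I01 :=
  match phi with
  | FTop => fun _ => exist _ 1 one01_pf
  | FNeg p => fun x => neg01 (sem p x)
  | FMin p1 p2 => fun x => min01 (sem p1 x) (sem p2 x)
  | FSub q hq p => fun x => exist _ (Rmax (val01 (sem p x) - Q2R q) 0) (sub01_pf (Q2R q) hq (sem p x))
  | FBox l p => fun x => tau l (Bmap X I01 (sem p) (alpha x))
  end.

Definition logical_dist_set (s t : X) : R -> Prop :=
  fun r => exists phi : form Lam, r = Rabs (val01 (sem phi s) - val01 (sem phi t)).

Definition is_logical_dist (s t : X) (r : R) : Prop :=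
  is_lub (logical_dist_set s t) r.

Definition pseudometric1 (d : X -> X -> R) : Prop :=
  (forall x, d x x = 0) /\
  (forall x y, d x y = d y x) /\
  (forall x y z, d x z <= d x y + d y z) /\
  (forall x y, 0 <= d x y <= 1).

Definition nonexpansive (d : X -> X -> R) (h : X -> I01) : Prop :=
  forall x y, Rabs (val01 (h x) - val01 (h y)) <= d x y.

(* The values whose supremum is d_B(t1,t2); 0 is included so that the
   supremum of an empty family (Lambda empty) is 0, and otherwise it does
   not change the supremum since all values are nonnegative. *)
Definition liftB_set (d : X -> X -> R) (t1 t2 : B X) : R -> Prop :=
  fun r => r = 0 \/
    exists (l : Lam) (h : X -> I01), nonexpansive d h /\
      r = Rabs (val01 (tau l (Bmap X I01 h t1)) - val01 (tau l (Bmap X I01 h t2))).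

Definition is_fixpoint (d : X -> X -> R) : Prop :=
  forall s t, is_lub (liftB_set d (alpha s) (alpha t)) (d s t).

Definition is_behavioral_dist (d : X -> X -> R) : Prop :=
  pseudometric1 d /\ is_fixpoint d /\
  (forall d', pseudometric1 d' -> is_fixpoint d' -> forall s t, d s t <= d' s t).

End Semantics.

(* Every formula denotes a map that is nonexpansive for d_alpha: the boolean
   connectives and truncated subtraction are 1-Lipschitz on [0,1], and for a
   modality the fixpoint equation bounds |tau_l(B[[phi]](alpha s)) -
   tau_l(B[[phi]](alpha t))| by d_alpha(s,t), because [[phi]] is itself one of
   the nonexpansive maps h ranging in the definition of d_B.  Hence every
   |[[phi]](s) - [[phi]](t)| is at most d_alpha(s,t), and so is their supremum.
   Only the inequality d_B <= d of the fixpoint equation is needed. *)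

From Stdlib Require Import Reals Lra.
Open Scope R_scope.

Lemma Rabs_le_bounds (x e : R) : Rabs x <= e -> - e <= x <= e.
Proof.
  intros Hx; pose proof (Rle_abs x); pose proof (Rle_abs (- x)).
  rewrite Rabs_Ropp in *; lra.
Qed.

Lemma Rabs_Rmin_sub_le (a b c d e : R) :
  Rabs (a - c) <= e -> Rabs (b - d) <= e -> Rabs (Rmin a b - Rmin c d) <= e.
Proof.
  intros Hac%Rabs_le_bounds Hbd%Rabs_le_bounds; apply Rabs_le.
  unfold Rmin; destruct (Rle_dec a b), (Rle_dec c d); lra.
Qed.

Lemma Rabs_Rmax_sub0_le (a b q e : R) :
  Rabs (a - b) <= e -> Rabs (Rmax (a - q) 0 - Rmax (b - q) 0) <= e.
Proof.
  intros Hab. pose proof (Rabs_pos (a - b)).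
  apply Rabs_le_bounds in Hab; apply Rabs_le.
  unfold Rmax; destruct (Rle_dec (a - q) 0), (Rle_dec (b - q) 0); lra.
Qed.

Lemma Rabs_neg01_sub (x y : I01) :
  Rabs (val01 (neg01 x) - val01 (neg01 y)) = Rabs (val01 x - val01 y).
Proof.
  unfold neg01, val01; simpl.
  replace (1 - proj1_sig x - (1 - proj1_sig y)) with (- (proj1_sig x - proj1_sig y))
    by ring.
  apply Rabs_Ropp.
Qed.

Section LogicalBelowBehavioral.

Variable B : Type -> Type.
Variable Bmap : forall X Y : Type, (X -> Y) -> B X -> B Y.
Variable Lam : Type.
Variable tau : Lam -> B I01 -> I01.
Variable X : Type.
Variable alpha : X -> B X.

Definition lift_bounded (d : X -> X -> R) : Prop :=
  forall s t, is_upper_bound (liftB_set B Bmap Lam tau X d (alpha s) (alpha t)) (d s t).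

Lemma fixpoint_lift_bounded (d : X -> X -> R) :
  is_fixpoint B Bmap Lam tau X alpha d -> lift_bounded d.
Proof. intros Hfix s t; apply (Hfix s t). Qed.

(* 0 belongs to every lift set. *)
Lemma lift_bounded_nonneg (d : X -> X -> R) :
  lift_bounded d -> forall s t, 0 <= d s t.
Proof. intros Hd s t; apply Hd; now left. Qed.

Lemma sem_nonexpansive (d : X -> X -> R) :
  lift_bounded d -> forall phi, nonexpansive X d (sem B Bmap Lam tau X alpha phi).
Proof.
  intros Hd phi.
  induction phi as [| p IH | p1 IH1 p2 IH2 | q hq p IH | l p IH]; intros x y; cbn [sem].
  - unfold val01; simpl.
    rewrite Rminus_diag, Rabs_R0; apply lift_bounded_nonneg, Hd.
  - rewrite Rabs_neg01_sub; apply IH.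
  - apply Rabs_Rmin_sub_le; [apply IH1 | apply IH2].
  - apply Rabs_Rmax_sub0_le, IH.
  - apply Hd; right.
    exists l, (sem B Bmap Lam tau X alpha p); split; [exact IH | reflexivity].
Qed.

Lemma logical_dist_le (d : X -> X -> R) (s t : X) (dL : R) :
  lift_bounded d -> is_logical_dist B Bmap Lam tau X alpha s t dL -> dL <= d s t.
Proof.
  intros Hd [_ Hleast]; apply Hleast.
  intros r [phi ->]; apply sem_nonexpansive, Hd.
Qed.

End LogicalBelowBehavioral.

Theorem corollaryV2
  (B : Type -> Type) (Bmap : forall X Y : Type, (X -> Y) -> B X -> B Y)
  (Bmap_id : forall (X : Type) (b : B X), Bmap X X (fun x => x) b = b)
  (Bmap_comp : forall (X Y Z : Type) (f : X -> Y) (g : Y -> Z) (b : B X),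
      Bmap X Z (fun x => g (f x)) b = Bmap Y Z g (Bmap X Y f b))
  (Lam : Type) (tau : Lam -> B I01 -> I01)
  (X : Type) (alpha : X -> B X)
  (d : X -> X -> R) (Hd : is_behavioral_dist B Bmap Lam tau X alpha d)
  (s t : X) (dL : R) (HdL : is_logical_dist B Bmap Lam tau X alpha s t dL) :
  dL <= d s t.
Proof.
  destruct Hd as [_ [Hfix _]].
  apply (logical_dist_le B Bmap Lam tau X alpha); [| exact HdL].
  exact (fixpoint_lift_bounded B Bmap Lam tau X alpha d Hfix).
Qed.
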